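(* Let $V$ be a real vector space of dimension $n\ge 3$ and let $R\in\mathfrak{r}(V)$. Then $R\in\mathfrak{a}(V)\oplus\mathfrak{s}(V)$ if and only if $R^*\in\mathfrak{r}(V)$.
   Context: $\mathfrak{r}(V)$ is the space of $(0,4)$-tensors $R$ on $V$ satisfying $R(x,y,z,w)=-R(y,x,z,w)$ and $R(x,y,z,w)+R(y,z,x,w)+R(z,x,y,w)=0$ for all $x,y,z,w\in V$ (generalized curvature tensors). For a $(0,4)$-tensor $R$ its conjugate is $R^*(x,y,z,w):=-R(x,y,w,z)$. $\mathfrak{a}(V)=\{R\in\mathfrak{r}(V): R(x,y,z,w)=-R(x,y,w,z)\}$ (algebraic curvature tensors) and $\mathfrak{s}(V)=\{R\in\mathfrak{r}(V): R(x,y,z,w)=R(x,y,w,z)\}$. *)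

From HB Require Import structures.
From mathcomp Require Import all_boot all_order all_algebra.
Set Implicit Arguments. Unset Strict Implicit. Unset Printing Implicit Defensive.
Import Order.TTheory GRing.Theory Num.Theory.
Local Open Scope ring_scope.

Section Tensors.
Variables (R : realFieldType) (V : vectType R).

Definition tensor04 (T : V -> V -> V -> V -> R) : Prop :=
  [/\ forall (a : R) x x' y z w, T (a *: x + x') y z w = a * T x y z w + T x' y z w,
      forall (a : R) x y y' z w, T x (a *: y + y') z w = a * T x y z w + T x y' z w,
      forall (a : R) x y z z' w, T x y (a *: z + z') w = a * T x y z w + T x y z' w &
      forall (a : R) x y z w w', T x y z (a *: w + w') = a * T x y z w + T x y z w'].

Definition in_r (T : V -> V -> V -> V -> R) : Prop :=
  [/\ tensor04 T,
      forall x y z w, T x y z w = - T y x z w &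
      forall x y z w, T x y z w + T y z x w + T z x y w = 0].

Definition tconj (T : V -> V -> V -> V -> R) : V -> V -> V -> V -> R :=
  fun x y z w => - T x y w z.

Definition in_a (T : V -> V -> V -> V -> R) : Prop :=
  in_r T /\ forall x y z w, T x y z w = - T x y w z.

Definition in_s (T : V -> V -> V -> V -> R) : Prop :=
  in_r T /\ forall x y z w, T x y z w = T x y w z.

Definition in_a_plus_s (T : V -> V -> V -> V -> R) : Prop :=
  exists A S, [/\ in_a A, in_s S & forall x y z w, T x y z w = A x y z w + S x y z w].

End Tensors.

From HB Require Import structures.
From mathcomp Require Import all_boot all_order all_algebra.
From mathcomp Require Import ring.
Import GRing.Theory Num.Theory.
Local Open Scope ring_scope.

(* r(V) is a linear subspace, and conjugation fixes a(V) and negates s(V).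
   So if R = A + S then the conjugate of R is A - S, which lies in r(V);
   conversely, if the conjugate C of R lies in r(V), then R = A + S with
   A = (R + C)/2 in a(V) and S = (R - C)/2 in s(V). *)

Section CurvatureTensors.
Variables (R : realFieldType) (V : vectType R).
Implicit Types T A S : V -> V -> V -> V -> R.

Lemma in_r_lincomb (a b : R) T1 T2 T :
  in_r T1 -> in_r T2 ->
  (forall x y z w, T x y z w = a * T1 x y z w + b * T2 x y z w) -> in_r T.
Proof.
move=> [[l1 l2 l3 l4] s1 b1] [[m1 m2 m3 m4] s2 b2] eT.
split; first split.
- by move=> c x x' y z w; rewrite !eT l1 m1; ring.
- by move=> c x y y' z w; rewrite !eT l2 m2; ring.
- by move=> c x y z z' w; rewrite !eT l3 m3; ring.
- by move=> c x y z w w'; rewrite !eT l4 m4; ring.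
- by move=> x y z w; rewrite !eT s1 s2; ring.
- move=> x y z w; rewrite !eT.
  have -> : a * T1 x y z w + b * T2 x y z w + (a * T1 y z x w + b * T2 y z x w)
     + (a * T1 z x y w + b * T2 z x y w) =
     a * (T1 x y z w + T1 y z x w + T1 z x y w) +
     b * (T2 x y z w + T2 y z x w + T2 z x y w) by ring.
  by rewrite b1 b2; ring.
Qed.

Arguments in_r_lincomb a b {T1 T2 T}.

Lemma in_r_tconj_a_plus_s T : in_a_plus_s T -> in_r (tconj T).
Proof.
move=> [A [S [[rA aA] [rS sS] eT]]].
apply: (in_r_lincomb 1 (-1) rA rS) => x y z w.
by rewrite /tconj eT (aA x y w z) (sS x y w z); ring.
Qed.

Lemma a_plus_s_in_r_tconj T : in_r T -> in_r (tconj T) -> in_a_plus_s T.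
Proof.
move=> rT rC.
have h2 : (2 : R) != 0 by rewrite pnatr_eq0.
exists (fun x y z w => 2^-1 * T x y z w + 2^-1 * tconj T x y z w).
exists (fun x y z w => 2^-1 * T x y z w + (- 2^-1) * tconj T x y z w).
split.
- by split=> [|x y z w]; [exact: in_r_lincomb _ _ rT rC _ | rewrite /tconj; ring].
- by split=> [|x y z w]; [exact: in_r_lincomb _ _ rT rC _ | rewrite /tconj; ring].
- by move=> x y z w; rewrite /tconj; field.
Qed.

End CurvatureTensors.

Theorem lemma2p10 (R : realFieldType) (V : vectType R) (n : nat)
  (hdim : \dim (fullv : {vspace V}) = n) (hn : (3 <= n)%N)
  (T : V -> V -> V -> V -> R) (hT : in_r T) :
  in_a_plus_s T <-> in_r (tconj T).
Proof.
split; [exact: in_r_tconj_a_plus_s | exact: a_plus_s_in_r_tconj].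
Qed.
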